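(* Let $U,V\in\mathbb{R}_{\max}^{m\times n}$, $b,d\in\mathbb{R}_{\max}^m$, $p\in\mathbb{R}_{\max}^n$, $q\in(\mathbb{R}\cup\{+\infty\})^n$, and suppose all finite entries of $p,q,U,b,V,d$ are integers. Consider the problem of minimizing $x^-\otimes p\oplus q^-\otimes x$ over $x\in\mathbb{R}^n$ subject to $U\otimes x\oplus b\leq V\otimes x\oplus d$. If the optimal value of this problem is finite, then it is an integer multiple of $1/2$.
   Context: $\mathbb{R}_{\max}=\mathbb{R}\cup\{-\infty\}$ with $a\oplus b=\max(a,b)$ and $a\otimes b=a+b$, extended to matrices and vectors in the usual way ($(A\otimes x)_i=\max_j(a_{ij}+x_j)$, componentwise max for $\oplus$). The conjugate of $a\in\mathbb{R}\cup\{\pm\infty\}$ is $a^-=-a$ if $a\in\mathbb{R}$, $+\infty$ if $a=-\infty$, $-\infty$ if $a=+\infty$; for a column vector $x$, $x^-$ is the row vector $(x_i^-)$. Thus $x^-\otimes p=\max_i(p_i-x_i)$ and $q^-\otimes x=\max_i(x_i-q_i)$ (terms with $p_i=-\infty$ or $q_i=+\infty$ being $-\infty$). *)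

From HB Require Import structures.
From mathcomp Require Import all_boot all_order all_algebra.
From mathcomp Require Import all_classical all_reals ereal.
Set Implicit Arguments. Unset Strict Implicit. Unset Printing Implicit Defensive.
Import Order.TTheory GRing.Theory Num.Theory.
Local Open Scope classical_set_scope.
Local Open Scope ring_scope.
Local Open Scope ereal_scope.

(* An element of R_max = R ∪ {-oo}, represented in \bar R. *)
Definition in_Rmax (R : realType) (a : \bar R) : Prop := a <> +oo.

Definition int_or_inf (R : realType) (a : \bar R) : Prop :=
  a = -oo \/ a = +oo \/ exists z : int, a = (z%:~R)%:E.

Definition mp_mul (R : realType) (m n : nat) (A : 'I_m -> 'I_n -> \bar R)
  (x : 'I_n -> \bar R) : 'I_m -> \bar R :=
  fun i => \big[maxe/-oo]_(j < n) (A i j + x j).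

(* x^- ⊗ p = max_i (p_i - x_i) ; q^- ⊗ x = max_i (x_i - q_i), for real x. *)
Definition mp_objective (R : realType) (n : nat) (p q : 'I_n -> \bar R)
  (x : 'I_n -> R) : \bar R :=
  maxe (\big[maxe/-oo]_(i < n) (p i - (x i)%:E))
       (\big[maxe/-oo]_(i < n) ((x i)%:E - q i)).

Definition mp_feasible (R : realType) (m n : nat) (U V : 'I_m -> 'I_n -> \bar R)
  (b d : 'I_m -> \bar R) (x : 'I_n -> R) : Prop :=
  forall i : 'I_m,
    maxe (mp_mul U (fun j => (x j)%:E) i) (b i)
    <= maxe (mp_mul V (fun j => (x j)%:E) i) (d i).

Definition mp_optval (R : realType) (m n : nat) (U V : 'I_m -> 'I_n -> \bar R)
  (b d : 'I_m -> \bar R) (p q : 'I_n -> \bar R) : \bar R :=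
  ereal_inf [set mp_objective p q x | x in [set x | mp_feasible U V b d x]].

(** Let [f] be a nondecreasing odd map of the reals commuting with integer
    translations.  Since all finite data are integers, [f] commutes with the
    max-plus operations: applied entrywise to a feasible point [x] it yields a
    feasible point whose objective value is the image under [f] of that of [x].
    If the optimum [r] lies strictly between [j] and [j + 1/2] for an integer
    [j], rounding to the nearest integer maps near-optimal points to points of
    value [j < r]; if it lies strictly between [j + 1/2] and [j + 1], sending
    every non-integer to the midpoint of its unit interval maps them to points
    of value [j + 1/2 < r].  Hence [2 r] is an integer. *)
From HB Require Import structures.
From mathcomp Require Import all_boot all_order all_algebra.
From mathcomp Require Import all_classical all_reals ereal.
From mathcomp Require Import ring lra.
Import Order.TTheory GRing.Theory Num.Theory.
Local Open Scope classical_set_scope.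
Local Open Scope ring_scope.

Section SymmetricRounding.
Context {R : archiRealFieldType}.
Implicit Types (c y : R) (j z : int).

Definition rounding (f : R -> R) : Prop :=
  [/\ {homo f : x y / x <= y},
      forall z y, f (z%:~R + y) = z%:~R + f y & {morph f : y / - y}].

(* [sym_round (1/2)] rounds to the nearest integer and fixes half-integers;
   [sym_round 0] fixes integers and sends any other real to the midpoint of
   its unit interval. *)
Definition sym_round c y : R :=
  ((Num.floor (y + c))%:~R + (Num.ceil (y - c))%:~R) / 2.

Lemma sym_round_rounding c : rounding (sym_round c).
Proof.
split.
- move=> y1 y2 le_y; rewrite /sym_round ler_pM2r // lerD // ler_int.
    by rewrite le_floor // lerD2r.
  by rewrite le_ceil // lerD2r.
- move=> z y; rewrite /sym_round -!addrA (floorDzr (intr_int _ z)).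
  rewrite (ceilDzr (intr_int _ z)) intrKfloor intrKceil !intrD; lra.
- move=> y; rewrite /sym_round.
  have -> : Num.floor (- y + c) = - Num.ceil (y - c).
    by rewrite floorNceil opprD opprK.
  have -> : Num.ceil (- y - c) = - Num.floor (y + c).
    by rewrite ceilNfloor opprD !opprK.
  rewrite !mulrNz; lra.
Qed.

Lemma sym_round_nearest j y : j%:~R - 2^-1 < y < j%:~R + 2^-1 ->
  sym_round 2^-1 y = j%:~R.
Proof.
move=> /andP[lt_jy lt_yj]; rewrite /sym_round.
have -> : Num.floor (y + 2^-1) = j by apply/eqP; rewrite floor_eq intrD; lra.
have -> : Num.ceil (y - 2^-1) = j by apply/eqP; rewrite ceil_eq intrB; lra.
lra.
Qed.

Lemma sym_round_midpoint j y : j%:~R < y < j%:~R + 1 ->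
  sym_round 0 y = j%:~R + 2^-1.
Proof.
move=> /andP[lt_jy lt_yj]; rewrite /sym_round !addr0 subr0.
have -> : Num.floor y = j by apply/eqP; rewrite floor_eq intrD; lra.
have -> : Num.ceil y = j + 1 by apply/eqP; rewrite ceil_eq addrK intrD; lra.
rewrite intrD; lra.
Qed.

Lemma rounding_int f z : rounding f -> f z%:~R = z%:~R.
Proof.
case=> _ f_shift f_odd.
have f0 : f 0 = 0 by have := f_odd 0; rewrite oppr0; lra.
by rewrite -[z%:~R]addr0 f_shift f0.
Qed.

End SymmetricRounding.

Local Open Scope ereal_scope.

Lemma er_map_max (R : realDomainType) (f : R -> R) :
  {homo f : x y / (x <= y)%R} -> {morph er_map f : a b / maxe a b}.
Proof.
move=> f_homo a b; case: (leP a b) => [le_ab|lt_ba].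
- by rewrite !max_r // le_er_map.
- by rewrite !max_l // le_er_map // ltW.
Qed.

Lemma er_map_bigmax (R : realDomainType) (f : R -> R) (I : finType)
    (F : I -> \bar R) :
  {homo f : x y / (x <= y)%R} ->
  er_map f (\big[maxe/-oo]_i F i) = \big[maxe/-oo]_i er_map f (F i).
Proof. by move=> f_homo; exact: (big_morph _ (er_map_max _ _ f_homo)). Qed.

Section RoundingMaxPlus.
Context {R : realType} {f : R -> R} (f_round : rounding f).
Let f_homo : {homo f : x y / (x <= y)%R}. Proof. by case: f_round. Qed.

Lemma er_map_int (u : \bar R) : int_or_inf u -> er_map f u = u.
Proof. by case=> [->|[->|[z ->]]] //=; rewrite rounding_int. Qed.

Lemma er_map_addl (u : \bar R) y : in_Rmax u -> int_or_inf u ->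
  er_map f (u + y%:E) = u + (f y)%:E.
Proof.
case: f_round => _ f_shift _ u_fin [->|[->|[z ->]]] //=.
by rewrite f_shift.
Qed.

Lemma er_map_subl (u : \bar R) y : in_Rmax u -> int_or_inf u ->
  er_map f (u - y%:E) = u - (f y)%:E.
Proof.
case: f_round => _ _ f_odd u_fin u_int.
by rewrite -!EFinN er_map_addl // f_odd.
Qed.

Lemma er_map_subr (u : \bar R) y : u <> -oo -> int_or_inf u ->
  er_map f (y%:E - u) = (f y)%:E - u.
Proof.
case: f_round => _ f_shift _ u_fin [//|[->|[z ->]]] //=.
by rewrite -!EFinB /= !(addrC _ (- z%:~R)%R) -mulrNz f_shift.
Qed.

Context {m n : nat} {U V : 'I_m -> 'I_n -> \bar R} {b d : 'I_m -> \bar R}.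
Context {p q : 'I_n -> \bar R}.

Lemma mp_mul_er_map (W : 'I_m -> 'I_n -> \bar R) x i :
  (forall i j, in_Rmax (W i j)) -> (forall i j, int_or_inf (W i j)) ->
  mp_mul W (fun j => (f (x j))%:E) i =
  er_map f (mp_mul W (fun j => (x j)%:E) i).
Proof.
move=> W_fin W_int; rewrite /mp_mul er_map_bigmax //.
by apply: eq_bigr => j _; rewrite er_map_addl.
Qed.

Lemma mp_feasible_er_map x :
  (forall i j, in_Rmax (U i j)) -> (forall i j, in_Rmax (V i j)) ->
  (forall i j, int_or_inf (U i j)) -> (forall i j, int_or_inf (V i j)) ->
  (forall i, int_or_inf (b i)) -> (forall i, int_or_inf (d i)) ->
  mp_feasible U V b d x -> mp_feasible U V b d (f \o x).
Proof.
move=> U_fin V_fin U_int V_int b_int d_int feas_x i /=.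
rewrite !mp_mul_er_map // -(er_map_int _ (b_int i)) -(er_map_int _ (d_int i)).
by rewrite -!er_map_max // le_er_map.
Qed.

Lemma mp_objective_er_map x :
  (forall j, in_Rmax (p j)) -> (forall j, q j <> -oo) ->
  (forall j, int_or_inf (p j)) -> (forall j, int_or_inf (q j)) ->
  mp_objective p q (f \o x) = er_map f (mp_objective p q x).
Proof.
move=> p_fin q_fin p_int q_int.
rewrite /mp_objective er_map_max // !er_map_bigmax //.
by congr maxe; apply: eq_bigr => j _; rewrite ?er_map_subl ?er_map_subr.
Qed.

Lemma mp_optval_le_rounding :
  (forall i j, in_Rmax (U i j)) -> (forall i j, in_Rmax (V i j)) ->
  (forall j, in_Rmax (p j)) -> (forall j, q j <> -oo) ->
  (forall i j, int_or_inf (U i j)) -> (forall i j, int_or_inf (V i j)) ->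
  (forall i, int_or_inf (b i)) -> (forall i, int_or_inf (d i)) ->
  (forall j, int_or_inf (p j)) -> (forall j, int_or_inf (q j)) ->
  forall r : R, mp_optval U V b d p q = r%:E ->
  forall t : R, (r < t)%R -> exists2 y, (r <= y < t)%R & (r <= f y)%R.
Proof.
move=> U_fin V_fin p_fin q_fin U_int V_int b_int d_int p_int q_int.
move=> r opt t lt_rt.
have opt_le x : mp_feasible U V b d x -> r%:E <= mp_objective p q x.
  by move=> feas_x; rewrite -opt; apply: ereal_inf_lbound; exists x.
have : mp_optval U V b d p q < t%:E by rewrite opt lte_fin.
case/ereal_inf_lt => _ [x feas_x <-] obj_lt_t.
have feas_fx := mp_feasible_er_map x U_fin V_fin U_int V_int b_int d_int feas_x.
have := opt_le _ feas_fx.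
rewrite mp_objective_er_map //.
move: obj_lt_t (opt_le _ feas_x); case: (mp_objective p q x) => [y| |] //=.
by rewrite !lte_fin !lee_fin => lt_yt le_ry le_r_fy; exists y; rewrite ?le_ry.
Qed.

End RoundingMaxPlus.

Theorem proposition9 (R : realType) (m n : nat)
  (U V : 'I_m -> 'I_n -> \bar R) (b d : 'I_m -> \bar R)
  (p q : 'I_n -> \bar R) :
  (forall i j, in_Rmax (U i j)) -> (forall i j, in_Rmax (V i j)) ->
  (forall i, in_Rmax (b i)) -> (forall i, in_Rmax (d i)) ->
  (forall j, in_Rmax (p j)) -> (forall j, q j <> -oo) ->
  (forall i j, int_or_inf (U i j)) -> (forall i j, int_or_inf (V i j)) ->
  (forall i, int_or_inf (b i)) -> (forall i, int_or_inf (d i)) ->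
  (forall j, int_or_inf (p j)) -> (forall j, int_or_inf (q j)) ->
  forall r : R, mp_optval U V b d p q = r%:E ->
  exists k : int, r = (k%:~R / 2)%R.
Proof.
move=> U_fin V_fin _ _ p_fin q_fin U_int V_int b_int d_int p_int q_int r opt.
have near_opt f (f_round : rounding f) := mp_optval_le_rounding f_round
  U_fin V_fin p_fin q_fin U_int V_int b_int d_int p_int q_int r opt.
have /andP[le_jr lt_rj] := floor_itv r; set j := Num.floor r in le_jr lt_rj.
rewrite intrD in lt_rj.
case: (ltrgtP r (j%:~R + 2^-1)) => [lt_r_half|gt_r_half|->].
- have [->|ne_rj] := eqVneq r j%:~R.
    by exists (2 * j)%R; rewrite intrM; field.
  have [y /andP[le_ry lt_y_half]] :=
    near_opt _ (sym_round_rounding 2^-1) _ lt_r_half.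
  rewrite (@sym_round_nearest _ j); last by apply/andP; split; lra.
  have : (j%:~R < r)%R by rewrite lt_neqAle eq_sym ne_rj.
  lra.
- have [y /andP[le_ry lt_y1]] := near_opt _ (sym_round_rounding 0) _ lt_rj.
  rewrite (@sym_round_midpoint _ j); last by apply/andP; split; lra.
  lra.
- by exists (2 * j + 1)%R; rewrite intrD intrM; field.
Qed.
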